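(* Let $k$ be a positive integer and let $G=G_1*_k G_2$ where, for each $i=1,2$, either $G_i=K_1$ or $\tau(G_i)=\overline{\tau}(G_i)=\kappa'(G_i)=\overline{\kappa'}(G_i)=k$. Then $\tau(G)=\overline{\tau}(G)=\kappa'(G)=\overline{\kappa'}(G)=k$.
   Context: Graphs are finite, loopless, possibly with multiple edges. $\kappa'(G)$ is the edge connectivity; $\tau(G)$ is the maximum number of edge-disjoint spanning trees of a connected graph $G$ ($\tau(K_1)=\infty$). $\overline{\kappa'}(G)=\max\{\kappa'(H): H\subseteq G\}$ and $\overline{\tau}(G)=\max\{\tau(H): H\subseteq G\}$, maxima over subgraphs. For vertex-disjoint connected graphs $G_1,G_2$ and a set $K$ of $k$ edges each having one end in $V(G_1)$ and the other in $V(G_2)$, the $k$-edge-join $G_1*_k G_2$ is the graph with vertex set $V(G_1)\cup V(G_2)$ and edge set $E(G_1)\cup E(G_2)\cup K$. *)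

(* Loopless multigraphs: a finite vertex type V, a finite
   edge type E, and endpoint maps src tgt : E -> V (orientation irrelevant).
   A subgraph is a pair (S, F) with S : {set V}, F : {set E}, every edge of F
   having both ends in S. *)
From mathcomp Require Import all_boot.
Set Implicit Arguments. Unset Strict Implicit. Unset Printing Implicit Defensive.

Section Graphs.
Variables (V E : finType) (src tgt : E -> V).

Definition adj (F : {set E}) : rel V := fun x y =>
  [exists e in F, ((src e == x) && (tgt e == y)) || ((src e == y) && (tgt e == x))].

Definition is_subgraph (S : {set V}) (F : {set E}) : bool :=
  [forall e in F, (src e \in S) && (tgt e \in S)].

Definition inside (S : {set V}) : {set E} :=
  [set e | (src e \in S) && (tgt e \in S)].

Definition connectedg (S : {set V}) (F : {set E}) : bool :=
  [forall x in S, forall y in S, connect (adj F) x y].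

(* acyclic edge set: no edge lies on a cycle, i.e. removing any edge e
   disconnects its two ends *)
Definition acyclic (T : {set E}) : bool :=
  [forall e in T, ~~ connect (adj (T :\ e)) (src e) (tgt e)].

Definition spanning_tree (S : {set V}) (F T : {set E}) : bool :=
  [&& T \subset F, connectedg S T & acyclic T].

Definition has_trees (S : {set V}) (F : {set E}) (k : nat) : bool :=
  [exists Tr : {ffun 'I_k -> {set E}},
     [forall i, spanning_tree S F (Tr i)] &&
     [forall i, forall j, (i != j) ==> [disjoint Tr i & Tr j]]].

(* Meaningful for
   graphs with at least two vertices (then each tree uses >= 1 edge, so the
   number is at most #|F|); tau(K_1) = oo is never used below. *)
Definition tau (S : {set V}) (F : {set E}) : nat :=
  \max_(k < #|F|.+1 | has_trees S F k) (k : nat).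

(* kappa'(S,F): edge connectivity = minimum size of an edge set whose removal
   disconnects (S,F) (for #|S| >= 2; removing F itself disconnects). *)
Definition kappa' (S : {set V}) (F : {set E}) : nat :=
  \big[minn/#|F|]_(C : {set E} | (C \subset F) && ~~ connectedg S (F :\: C)) #|C|.

Definition subg_of (S : {set V}) (F : {set E}) (P : {set V} * {set E}) : bool :=
  [&& P.1 \subset S, P.2 \subset F, is_subgraph P.1 P.2 & 1 < #|P.1|].

Definition taubar (S : {set V}) (F : {set E}) : nat :=
  \max_(P | subg_of S F P) tau P.1 P.2.

Definition kappabar (S : {set V}) (F : {set E}) : nat :=
  \max_(P | subg_of S F P) kappa' P.1 P.2.

Definition crossing (S : {set V}) : {set E} :=
  [set e | (src e \in S) != (tgt e \in S)].

End Graphs.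

(** The [k] crossing edges of [G1 *_k G2] form a disconnecting edge set, so
    [kappa'(G) <= k].  They also yield [k] edge-disjoint spanning trees: glue
    the [i]-th spanning tree of [G1], the [i]-th spanning tree of [G2] (empty
    when that side is [K_1]) and the [i]-th crossing edge.  As [tau <= kappa']
    in any graph, [tau(G) = kappa'(G) = k].  A subgraph of [G] lying in one
    side has edge connectivity at most [kappabar] of that side, i.e. [k], and
    one meeting both sides is disconnected by at most [k] crossing edges; so
    [taubar(G) <= kappabar(G) <= k]. *)

From mathcomp Require Import all_boot all_order zify.
Set Implicit Arguments. Unset Strict Implicit. Unset Printing Implicit Defensive.

Lemma connect_homo (T T' : finType) (f : T -> T') (e : rel T) (e' : rel T') :
  (forall x y, e x y -> connect e' (f x) (f y)) ->
  forall x y, connect e x y -> connect e' (f x) (f y).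
Proof.
move=> fe x _ /connectP[p ep ->]; elim: p x ep => [|z p IHp] x /=.
  by move=> _; apply: connect0.
by case/andP=> /fe xz /IHp; apply: connect_trans.
Qed.

Section Graphs.
Variables (V E : finType) (src tgt : E -> V).
Implicit Types (S W : {set V}) (A B C F T : {set E}).

Lemma in_inside W e : (e \in inside src tgt W) = (src e \in W) && (tgt e \in W).
Proof. by rewrite inE. Qed.

Lemma in_crossing W e : (e \in crossing src tgt W) = ((src e \in W) != (tgt e \in W)).
Proof. by rewrite inE. Qed.

Lemma crossingC W : crossing src tgt (~: W) = crossing src tgt W.
Proof. by apply/setP=> e; rewrite !in_crossing !inE; do 2!case: (_ \in W). Qed.

Lemma adj_sym F : symmetric (adj src tgt F).
Proof. by move=> x y; apply/existsP/existsP => -[e He]; exists e; rewrite orbC. Qed.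

Lemma connect_adjC F x y :
  connect (adj src tgt F) x y = connect (adj src tgt F) y x.
Proof. exact: (sym_connect_sym (adj_sym F)). Qed.

Lemma adj_edge F e : e \in F -> adj src tgt F (src e) (tgt e).
Proof. by move=> eF; apply/existsP; exists e; rewrite eF !eqxx. Qed.

Lemma adj_ind F (R : V -> V -> Prop) : (forall x y, R x y -> R y x) ->
  {in F, forall e, R (src e) (tgt e)} -> forall x y, adj src tgt F x y -> R x y.
Proof.
move=> Rsym RF x y /existsP[e /andP[eF /orP[]]] /andP[/eqP<- /eqP<-].
  exact: RF.
exact/Rsym/RF.
Qed.

Lemma connect_subset F F' : F \subset F' ->
  subrel (connect (adj src tgt F)) (connect (adj src tgt F')).
Proof.
move=> sFF'; apply: connect_sub; apply: adj_ind => [x y|e eF].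
  by rewrite connect_adjC.
exact/connect1/adj_edge/(subsetP sFF').
Qed.

Lemma connectedgP S F :
  reflect {in S &, forall x y, connect (adj src tgt F) x y} (connectedg src tgt S F).
Proof.
apply: (iffP forall_inP) => [cS x y xS | cS x xS]; first exact: (forall_inP (cS x xS)).
by apply/forall_inP => y; apply: cS.
Qed.

Lemma closed_adj W F : {in F, forall e, (src e \in W) = (tgt e \in W)} ->
  closed (adj src tgt F) W.
Proof. by move=> FW; apply: adj_ind => [x y ->|]. Qed.

Lemma kappa'_le_cut S F C : C \subset F -> ~~ connectedg src tgt S (F :\: C) ->
  kappa' src tgt S F <= #|C|.
Proof.
move=> sCF ncut; rewrite /kappa' -minEnat -leEnat.
by apply: Order.TotalTheory.bigmin_le_cond; rewrite sCF.
Qed.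

Lemma kappa'_le_crossing S F W x y : x \in S -> y \in S -> x \in W -> y \notin W ->
  kappa' src tgt S F <= #|crossing src tgt W|.
Proof.
move=> xS yS xW yW; apply: leq_trans (subset_leq_card (subsetIr F _)).
apply: kappa'_le_cut; first exact: subsetIl.
apply: contraNN yW => /connectedgP/(_ x y xS yS)/(closed_connect _)<- //.
apply: closed_adj => e /setDP[eF]; rewrite inE eF in_crossing /=.
by move/negPn/eqP.
Qed.

Lemma spanning_tree_meets_cut S F T C : spanning_tree src tgt S F T ->
  ~~ connectedg src tgt S (F :\: C) -> ~~ [disjoint T & C].
Proof.
case/and3P=> sTF /connectedgP cT _; apply: contraNN => dTC.
apply/connectedgP => x y xS yS; apply: connect_subset (cT x y xS yS).
by rewrite subsetD sTF.
Qed.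

Lemma tau_le_kappa' S F : tau src tgt S F <= kappa' src tgt S F.
Proof.
apply/bigmax_leqP => m /existsP[Tr /andP[/forallP trees /forallP disj]].
apply: (big_ind (fun n => m <= n)) => [||C /andP[_ ncut]].
- by rewrite -ltnS.
- by move=> a b ma mb; rewrite leq_min ma mb.
have /fin_all_exists[g gTC] : forall i, exists e, e \in Tr i :&: C.
  by move=> i; apply/set0Pn; rewrite setI_eq0 (spanning_tree_meets_cut (trees i)).
have g_inj : injective g.
  move=> i j gij; apply/eqP; apply: contraT => ij.
  have := disjointFr (implyP (forallP (disj i) j) ij) (setIP (gTC i)).1.
  by rewrite gij (setIP (gTC j)).1.
rewrite -[m : nat]card_ord -(card_imset _ g_inj); apply/subset_leq_card/subsetP.
by move=> _ /imsetP[i _ ->]; case/setIP: (gTC i).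
Qed.

Lemma has_trees0 S F : has_trees src tgt S F 0.
Proof. by apply/existsP; exists [ffun => set0]; apply/andP; split; apply/forallP => -[]. Qed.

Lemma has_trees_tau S F : has_trees src tgt S F (tau src tgt S F).
Proof.
rewrite /tau (bigmax_eq_arg ord0) ?has_trees0 //.
by case: arg_maxnP; first exact: has_trees0.
Qed.

Lemma has_trees_le_tau S F k : k <= #|F| -> has_trees src tgt S F k ->
  k <= tau src tgt S F.
Proof.
rewrite -ltnS => kF; exact: (@leq_bigmax_cond _ _ val (Ordinal kF)).
Qed.

Lemma subg_of_self S F : is_subgraph src tgt S F -> 1 < #|S| -> subg_of src tgt S F (S, F).
Proof. by move=> sub S2; rewrite /subg_of /= !subxx sub S2. Qed.

Lemma tau_le_taubar S F : is_subgraph src tgt S F -> 1 < #|S| ->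
  tau src tgt S F <= taubar src tgt S F.
Proof. by move=> sub S2; apply: (leq_bigmax_cond _ (subg_of_self sub S2)). Qed.

Lemma kappa'_le_kappabar S F : is_subgraph src tgt S F -> 1 < #|S| ->
  kappa' src tgt S F <= kappabar src tgt S F.
Proof. by move=> sub S2; apply: (leq_bigmax_cond _ (subg_of_self sub S2)). Qed.

Lemma subg_of_inside S F W P : subg_of src tgt S F P -> P.1 \subset W ->
  subg_of src tgt W (inside src tgt W) P.
Proof.
case/and4P=> _ _ sub P2 sW; apply/and4P; split=> //; apply/subsetP => e eP.
by have /andP[se te] := forall_inP sub e eP; rewrite in_inside !(subsetP sW).
Qed.

Lemma taubar_le_kappabar S F : taubar src tgt S F <= kappabar src tgt S F.
Proof.
apply/bigmax_leqP => P hP.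
exact: leq_trans (tau_le_kappa' _ _) (leq_bigmax_cond _ hP).
Qed.

Lemma spanning_tree_set0 u F : spanning_tree src tgt [set u] F set0.
Proof.
apply/and3P; split; first exact: sub0set.
  by apply/connectedgP => x y /set1P-> /set1P->.
by apply/forall_inP => e; rewrite inE.
Qed.

Lemma has_trees_set1 u F k : has_trees src tgt [set u] F k.
Proof.
apply/existsP; exists [ffun => set0]; apply/andP; split; apply/forallP => i.
  by rewrite ffunE spanning_tree_set0.
by apply/forallP => j; rewrite !ffunE -setI_eq0 setI0 eqxx implybT.
Qed.

Lemma connect_crossing_src W A c x : connectedg src tgt W A ->
  c \in crossing src tgt W -> x \in W -> connect (adj src tgt (c |: A)) x (src c).
Proof.
move=> /connectedgP cA; rewrite in_crossing => cW xW.
have sA : A \subset c |: A := subsetUr _ _.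
case sW: (src c \in W); first exact: connect_subset sA _ _ (cA _ _ xW sW).
have tW : tgt c \in W by move: cW; rewrite sW; case: (tgt c \in W).
apply: connect_trans (connect_subset sA (cA _ _ xW tW)) _.
by rewrite connect_adjC; apply/connect1/adj_edge/setU11.
Qed.

(* Collapsing [~: W] onto the end of [c] in [W] maps paths avoiding [e] in the
   glued graph to paths avoiding [e] in [A]. *)
Lemma glue_acyclic_side W A B c e :
  A \subset inside src tgt W -> acyclic src tgt A -> B \subset inside src tgt (~: W) ->
  c \in crossing src tgt W -> e \in A ->
  ~~ connect (adj src tgt ((c |: (A :|: B)) :\ e)) (src e) (tgt e).
Proof.
move=> sA acA sB; rewrite in_crossing => cW eA.
pose w := if src c \in W then src c else tgt c.
pose r x := if x \in W then x else w.
have /andP[se te] : (src e \in W) && (tgt e \in W) by rewrite -in_inside (subsetP sA).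
suff r_homo x y : adj src tgt ((c |: (A :|: B)) :\ e) x y ->
    connect (adj src tgt (A :\ e)) (r x) (r y).
  apply: contraNN (forall_inP acA e eA) => /(connect_homo r_homo).
  by rewrite /r se te.
move: x y; apply: adj_ind => [x y|e']; first by rewrite connect_adjC.
rewrite !inE => /andP[e'e /or3P[/eqP-> | e'A | e'B]].
- by rewrite /r /w; case: (src c \in W) cW; case: (tgt c \in W).
- have /andP[se' te'] : (src e' \in W) && (tgt e' \in W) by rewrite -in_inside (subsetP sA).
  by rewrite /r se' te'; apply/connect1/adj_edge; rewrite !inE e'e e'A.
have := subsetP sB e' e'B; rewrite in_inside !inE => /andP[/negPf se' /negPf te'].
by rewrite /r se' te'.
Qed.

Lemma spanning_tree_glue W A B c :
  spanning_tree src tgt W (inside src tgt W) A ->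
  spanning_tree src tgt (~: W) (inside src tgt (~: W)) B ->
  c \in crossing src tgt W ->
  spanning_tree src tgt [set: V] [set: E] (c |: (A :|: B)).
Proof.
move=> /and3P[sA cA acA] /and3P[sB cB acB] cW.
have cW' : c \in crossing src tgt (~: W) by rewrite crossingC.
apply/and3P; split; first exact: subsetT.
  have toc z : connect (adj src tgt (c |: (A :|: B))) z (src c).
    have [zW | ] := boolP (z \in W); last rewrite -in_setC => zW.
      exact: connect_subset (setUS _ (subsetUl _ _)) _ _ (connect_crossing_src cA cW zW).
    exact: connect_subset (setUS _ (subsetUr _ _)) _ _ (connect_crossing_src cB cW' zW).
  by apply/connectedgP => x y _ _; apply: connect_trans (toc x) _; rewrite connect_adjC.
apply/forall_inP => e /setU1P[-> | /setUP[eA | eB]].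
- (* once [c] is removed, no edge crosses [W] *)
  apply: contraTN cW; rewrite in_crossing negbK.
  move=> /(closed_connect (closed_adj _)) -> //.
  move=> e' /setD1P[/negPf e'c /setU1P[/eqP | /setUP[]]]; rewrite ?e'c //.
    by move/(subsetP sA); rewrite in_inside => /andP[-> ->].
  by move/(subsetP sB); rewrite in_inside !inE => /andP[/negPf-> /negPf->].
- exact: glue_acyclic_side sA acA sB cW eA.
by rewrite (setUC A); apply: glue_acyclic_side sB acB _ cW' eB; rewrite setCK.
Qed.

Lemma glue_disjoint W A A' B B' c c' :
  A \subset inside src tgt W -> A' \subset inside src tgt W ->
  B \subset inside src tgt (~: W) -> B' \subset inside src tgt (~: W) ->
  c \in crossing src tgt W -> c' \in crossing src tgt W -> c != c' ->
  [disjoint A & A'] -> [disjoint B & B'] ->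
  [disjoint c |: (A :|: B) & c' |: (A' :|: B')].
Proof.
move=> /subsetP sA /subsetP sA' /subsetP sB /subsetP sB'.
rewrite !in_crossing => cW c'W cc' dA dB.
have inW e : e \in inside src tgt W -> (src e \in W) && (tgt e \in W) by rewrite in_inside.
have outW e : e \in inside src tgt (~: W) -> (src e \notin W) && (tgt e \notin W).
  by rewrite in_inside !inE.
apply/pred0P => e /=; apply/negP => /andP[].
case/setU1P=> [->|/setUP[eA|eB]] /setU1P[ec'|/setUP[eA'|eB']].
- by rewrite ec' eqxx in cc'.
- by move: cW; case/andP: (inW c (sA' c eA')) => -> ->.
- by move: cW; case/andP: (outW c (sB' c eB')) => /negPf-> /negPf->.
- by move: c'W; rewrite -ec'; case/andP: (inW e (sA e eA)) => -> ->.
- by rewrite (disjointFr dA eA) in eA'.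
- by move: (inW e (sA e eA)) (outW e (sB' e eB')) => /andP[-> _] /andP[].
- by move: c'W; rewrite -ec'; case/andP: (outW e (sB e eB)) => /negPf-> /negPf->.
- by move: (inW e (sA' e eA')) (outW e (sB e eB)) => /andP[-> _] /andP[].
by rewrite (disjointFr dB eB) in eB'.
Qed.

Lemma has_trees_join W k : #|crossing src tgt W| = k ->
  has_trees src tgt W (inside src tgt W) k ->
  has_trees src tgt (~: W) (inside src tgt (~: W)) k ->
  has_trees src tgt [set: V] [set: E] k.
Proof.
move=> hcross /existsP[A /andP[/forallP treeA /forallP disjA]].
move=> /existsP[B /andP[/forallP treeB /forallP disjB]].
pose c (i : 'I_k) := enum_val (cast_ord (esym hcross) i).
have cW i : c i \in crossing src tgt W := enum_valP _.
have c_inj : injective c by move=> i j /enum_val_inj/cast_ord_inj.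
have sA i : A i \subset inside src tgt W by case/and3P: (treeA i).
have sB i : B i \subset inside src tgt (~: W) by case/and3P: (treeB i).
apply/existsP; exists [ffun i => c i |: (A i :|: B i)].
apply/andP; split; apply/forallP => i.
  by rewrite ffunE (spanning_tree_glue (treeA i) (treeB i) (cW i)).
apply/forallP => j; apply/implyP => ij; rewrite !ffunE.
apply: glue_disjoint; rewrite ?sA ?sB ?cW ?(inj_eq c_inj) //.
  exact: implyP (forallP (disjA i) j) ij.
exact: implyP (forallP (disjB i) j) ij.
Qed.

Definition join_factor W k :=
  #|W| = 1 \/ [/\ tau src tgt W (inside src tgt W) = k,
                  taubar src tgt W (inside src tgt W) = k,
                  kappa' src tgt W (inside src tgt W) = k &
                  kappabar src tgt W (inside src tgt W) = k].

Lemma join_factor_has_trees W k :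
  join_factor W k -> has_trees src tgt W (inside src tgt W) k.
Proof. by case=> [/eqP/cards1P[u ->] | [<- _ _ _]]; rewrite (has_trees_set1, has_trees_tau). Qed.

Lemma join_subg_kappa'_le W k P : #|crossing src tgt W| = k ->
  join_factor W k -> join_factor (~: W) k ->
  subg_of src tgt [set: V] [set: E] P -> kappa' src tgt P.1 P.2 <= k.
Proof.
move=> hcross hW hW' PG.
have factor_le U : join_factor U k -> P.1 \subset U -> kappa' src tgt P.1 P.2 <= k.
  case=> [U1 | [_ _ _ <-]] sPU; last exact: leq_bigmax_cond (subg_of_inside PG sPU).
  by case/and4P: PG => _ _ _; rewrite ltnNge -U1 subset_leq_card.
have [sW | /subsetPn[u uP uW]] := boolP (P.1 \subset W); first exact: factor_le hW sW.
have [sW' | /subsetPn[v vP]] := boolP (P.1 \subset ~: W); first exact: factor_le hW' sW'.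
by rewrite inE negbK -hcross => vW; apply: kappa'_le_crossing vP uP vW uW.
Qed.

End Graphs.

Theorem lemma3p8 (V E : finType) (src tgt : E -> V) (k : nat) (V1 : {set V})
  (loopless : forall e, src e != tgt e)
  (hk : 0 < k)
  (hV1 : V1 != set0) (hV2 : ~: V1 != set0)
  (hconn1 : connectedg src tgt V1 (inside src tgt V1))
  (hconn2 : connectedg src tgt (~: V1) (inside src tgt (~: V1)))
  (hcross : #|crossing src tgt V1| = k)
  (hG1 : #|V1| = 1 \/
         [/\ tau src tgt V1 (inside src tgt V1) = k,
             taubar src tgt V1 (inside src tgt V1) = k,
             kappa' src tgt V1 (inside src tgt V1) = k &
             kappabar src tgt V1 (inside src tgt V1) = k])
  (hG2 : #|~: V1| = 1 \/
         [/\ tau src tgt (~: V1) (inside src tgt (~: V1)) = k,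
             taubar src tgt (~: V1) (inside src tgt (~: V1)) = k,
             kappa' src tgt (~: V1) (inside src tgt (~: V1)) = k &
             kappabar src tgt (~: V1) (inside src tgt (~: V1)) = k]) :
  [/\ tau src tgt [set: V] [set: E] = k,
      taubar src tgt [set: V] [set: E] = k,
      kappa' src tgt [set: V] [set: E] = k &
      kappabar src tgt [set: V] [set: E] = k].
Proof.
have [x xV1] := set0Pn _ hV1.
have [y yV2] := set0Pn _ hV2; have yV1 : y \notin V1 by rewrite inE in yV2.
have kappa'_le : kappa' src tgt [set: V] [set: E] <= k.
  by rewrite -hcross (kappa'_le_crossing _ _ _ (in_setT x) (in_setT y) xV1 yV1).
have tau_ge : k <= tau src tgt [set: V] [set: E].
  apply: has_trees_le_tau; first by rewrite -hcross subset_leq_card ?subsetT.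
  exact: has_trees_join hcross (join_factor_has_trees hG1) (join_factor_has_trees hG2).
have kappabar_le : kappabar src tgt [set: V] [set: E] <= k.
  by apply/bigmax_leqP => P; apply: join_subg_kappa'_le hcross hG1 hG2.
have G_subgraph : is_subgraph src tgt [set: V] [set: E].
  by apply/forall_inP => e _; rewrite !inE.
have G_nontrivial : 1 < #|[set: V]|.
  by apply/card_gt1P; exists x, y; split; rewrite ?inE //; apply: contraNneq yV1 => <-.
have := tau_le_taubar G_subgraph G_nontrivial.
have := kappa'_le_kappabar G_subgraph G_nontrivial.
have := tau_le_kappa' src tgt [set: V] [set: E].
have := taubar_le_kappabar src tgt [set: V] [set: E].
split; lia.
Qed.
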